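(* For all $n,m\ge1$, $$F_n(x,y,q)F_{n+m-1}(xq,yq,q)-F_{n-1}(xq,yq,q)F_{n+m}(x,y,q)=(-y)^nq^{\binom n2}F_{m-1}(xq^{n+1},yq^{n+1},q).$$
   Context: $F_n(x,y,q)=\sum_{\pi}x^{s(\pi)}y^{d(\pi)}q^{rb(\pi)}$, where: - $\pi$ ranges over layered matchings of $[n]$, i.e. set partitions whose blocks are consecutive intervals $[1,i_1]/\dots/[i_{k-1}+1,n]$ of size $1$ or $2$; - $s(\pi)$ and $d(\pi)$ are the numbers of blocks of size $1$ and $2$; - for $\pi=B_1/\dots/B_k$ with $\min B_1<\dots<\min B_k$, $rb(\pi)$ is the number of pairs $(b,B_j)$ with $b\in B_i$, $j>i$, $\max B_j>b$. Equivalently, $F_0=1$, $F_1=x$, and $F_n=xq^{n-1}F_{n-1}+yq^{n-2}F_{n-2}$ for $n\ge2$. $F_n(xq^a,yq^a,q)$ denotes the substitution $x\mapsto xq^a$, $y\mapsto yq^a$. *)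

From HB Require Import structures.
From mathcomp Require Import all_boot all_order all_algebra.
Set Implicit Arguments. Unset Strict Implicit. Unset Printing Implicit Defensive.
Import GRing.Theory.
Local Open Scope ring_scope.

(* F_n(x,y,q) evaluated in an arbitrary commutative ring, via the recurrence
   F_0 = 1, F_1 = x, F_n = x q^(n-1) F_(n-1) + y q^(n-2) F_(n-2).
   Fpair n = (F_n, F_(n+1)). *)
Fixpoint Fpair (R : comRingType) (x y q : R) (n : nat) : R * R :=
  match n with
  | 0 => (1, x)
  | k.+1 => let (a, b) := Fpair x y q k in
            (b, x * q ^+ k.+1 * b + y * q ^+ k * a)
  end.

Definition F (R : comRingType) (x y q : R) (n : nat) : R := (Fpair x y q n).1.

Lemma F_rec_check (R : comRingType) (x y q : R) (n : nat) :
  F x y q n.+2 = x * q ^+ n.+1 * F x y q n.+1 + y * q ^+ n * F x y q n.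
Proof. rewrite /F /=; by case: (Fpair x y q n). Qed.

From HB Require Import structures.
From mathcomp Require Import all_boot all_order all_algebra.
From mathcomp Require Import ring.
Set Implicit Arguments.
Unset Strict Implicit.
Import GRing.Theory.
Local Open Scope ring_scope.

(* Write G_k = F_k(xq,yq,q) and H_j = F_j(xq^(n+1),yq^(n+1),q).
   For fixed n >= 1, the three sequences j |-> G_(n+j), j |-> F_(n+1+j) and
   j |-> H_j all satisfy one and the same second-order linear recurrence
       u_(j+2) = x q^(n+j+2) u_(j+1) + y q^(n+j+1) u_j.
   Hence both sides of the identity, viewed as sequences in j = m - 1, solve
   this recurrence, and it suffices to compare them at j = 0 and j = 1.
   At j = 0 the left side is the Cassini-type determinant
       D_n = F_n G_n - G_(n-1) F_(n+1) = (-y)^n q^C(n,2),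
   which follows from the Casoratian identity C_(j+1) = - b_j C_j valid for
   any two solutions of u_(j+2) = a_j u_(j+1) + b_j u_j; at j = 1 the left
   side is x q^(n+1) D_n, again by the recurrence. *)

Section LinearRecurrence.
Variables (R : comRingType) (a b : nat -> R).

Definition solves (u : nat -> R) : Prop :=
  forall j, u j.+2 = a j * u j.+1 + b j * u j.

Lemma solves_scale (c : R) (u : nat -> R) :
  solves u -> solves (fun j => c * u j).
Proof. by move=> su j; rewrite su; ring. Qed.

Lemma solves_sub (u v : nat -> R) :
  solves u -> solves v -> solves (fun j => u j - v j).
Proof. by move=> su sv j; rewrite su sv; ring. Qed.

Lemma solves_unique (u v : nat -> R) :
  solves u -> solves v -> u 0%N = v 0%N -> u 1%N = v 1%N ->
  forall j, u j = v j.
Proof.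
move=> su sv e0 e1 j.
suff [] : u j = v j /\ u j.+1 = v j.+1 by [].
elim: j => [|j [ej ej1]]; first by [].
by split; rewrite // su sv ej ej1.
Qed.

Lemma casoratian_step (u v : nat -> R) j :
  solves u -> solves v ->
  v j.+1 * u j.+2 - u j.+1 * v j.+2 = - b j * (v j * u j.+1 - u j * v j.+1).
Proof. by move=> su sv; rewrite su sv; ring. Qed.

End LinearRecurrence.

Section QRecurrence.
Variables (R : comRingType) (x y q : R).

Definition Frec (s : nat) : (nat -> R) -> Prop :=
  solves (fun j => x * q ^+ (s + j)%N.+1) (fun j => y * q ^+ (s + j)%N).

Lemma Frec_shift s t (u : nat -> R) :
  Frec s u -> Frec (s + t) (fun j => u (t + j)%N).
Proof. by move=> su j; rewrite /= !addnS su addnA. Qed.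

Lemma F_Frec t : Frec t (F (x * q ^+ t) (y * q ^+ t) q).
Proof. by move=> j; rewrite F_rec_check -addnS !exprD; ring. Qed.

Lemma F_Frec0 : Frec 0 (F x y q).
Proof. by have := F_Frec 0; rewrite !expr0 !mulr1. Qed.

Lemma Fq_Frec1 : Frec 1 (F (x * q) (y * q) q).
Proof. by have := F_Frec 1; rewrite expr1. Qed.

Lemma cassini p :
  F x y q p.+1 * F (x * q) (y * q) q p.+1
  - F (x * q) (y * q) q p * F x y q p.+2
  = (- y) ^+ p.+1 * q ^+ 'C(p.+1, 2).
Proof.
(* The left side is the Casoratian of G_j and F_(j+1), both solving Frec 1. *)
have sG := Fq_Frec1.
have sF : Frec 1 (fun j => F x y q (1 + j)%N) := Frec_shift 1 F_Frec0.
elim: p => [|p IH].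
  by rewrite /F /=; ring.
have := casoratian_step p sG sF; rewrite /= !add1n => ->.
by rewrite IH [in RHS]binS bin1 [in RHS]exprS exprD; ring.
Qed.

End QRecurrence.

Theorem corollary5p5 (R : comRingType) (x y q : R) (n m : nat) :
  (1 <= n)%N -> (1 <= m)%N ->
  F x y q n * F (x * q) (y * q) q (n + m - 1)
  - F (x * q) (y * q) q (n - 1) * F x y q (n + m)
  = (- y) ^+ n * q ^+ 'C(n, 2) * F (x * q ^+ n.+1) (y * q ^+ n.+1) q (m - 1).
Proof.
case: n => [|p] // _; case: m => [|k] // _.
have -> : (p.+1 + k.+1 - 1 = p.+1 + k)%N by rewrite addnS subn1.
have -> : (p.+1 + k.+1 = p.+2 + k)%N by rewrite addnS.
rewrite !subn1 /=.
set G := F (x * q) (y * q) q.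
set c := (- y) ^+ p.+1 * q ^+ 'C(p.+1, 2).
pose lhs j := F x y q p.+1 * G (p.+1 + j)%N - G p * F x y q (p.+2 + j)%N.
pose rhs j := c * F (x * q ^+ p.+2) (y * q ^+ p.+2) q j.
(* Both sides solve Frec (p + 2), as sequences in j = m - 1. *)
have slhs : Frec x y q p.+2 lhs.
  apply: solves_sub; apply: solves_scale.
  - by have := Frec_shift p.+1 (Fq_Frec1 x y q); rewrite add1n.
  - by have := Frec_shift p.+2 (F_Frec0 x y q); rewrite add0n.
have srhs : Frec x y q p.+2 rhs by apply/solves_scale/F_Frec.
(* At j = 0 both sides are the Cassini determinant; at j = 1 the left side
   is x q^(n+1) times it. *)
have e0 : lhs 0%N = rhs 0%N by rewrite /lhs /rhs !addn0 cassini /F /= mulr1.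
have e1 : lhs 1%N = rhs 1%N.
  rewrite /lhs /rhs !addn1 [G _]F_rec_check [F x y q _.+3]F_rec_check.
  have -> : F (x * q ^+ p.+2) (y * q ^+ p.+2) q 1 = x * q ^+ p.+2 by [].
  by rewrite /c -(cassini x y q p) -/G !exprS; ring.
exact: solves_unique slhs srhs e0 e1 k.
Qed.
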